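(* For every $\varepsilon>0$, the following algorithm \textsc{DP-AdvRand}$(\varepsilon)$ is $(\varepsilon,0)$-differentially private with respect to the multiset of constraints of a Max-$k$XOR instance with $m$ constraints on $n$ variables: (1) choose $s\in\{1,\dots,\lceil\log_2k\rceil\}$ uniformly at random and put each index of $[n]$ independently into $U$ with probability $p=2^{-s}$; let $F=[n]\setminus U$; (2) draw $x_F\in\{\pm1\}^F$ uniformly at random; (3) for each $j\in U$ let $\mathsf{Act}(j)$ be the set of constraints whose scope contains $j$ and no other index of $U$, let $\Lambda_j=\frac1{\sqrt m}\sum_{\ell\in\mathsf{Act}(j)}b_\ell\prod_{i\in S_\ell\setminus\{j\}}x_i$ (using the values $x_F$), and independently set $x_j=+1$ with probability $\frac{1+\tanh(\varepsilon'\Lambda_j)}2$ and $x_j=-1$ otherwise, where $\varepsilon'=\frac{\varepsilon\sqrt m}2$; (4) pick $r\in\{0,1,\dots,k\}$ uniformly, set $\eta=\cos(r\pi/k)/2$, and independently for each $j\in U$ flip $x_j\leftarrow-x_j$ with probability $(1-\eta)/2$; (5) output $x=(x_F,x_U)$.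
   Context: A Max-$k$XOR instance consists of $m$ constraints indexed by $\ell\in[m]$, each with a scope $S_\ell\subseteq[n]$ of size $k$ and a sign $b_\ell\in\{\pm1\}$, with predicate $P_\ell(x_{S_\ell})=\frac12+\frac{b_\ell}2\prod_{i\in S_\ell}x_i$; all scopes are assumed distinct as sets. Two instances are neighboring if one is obtained from the other by adding or removing one constraint. An algorithm $\mathcal M$ is $(\varepsilon,0)$-DP if $\Pr[\mathcal M(\Phi)\in T]\le e^\varepsilon\Pr[\mathcal M(\Phi')\in T]$ for all neighboring $\Phi,\Phi'$ and all output sets $T$. *)

From HB Require Import structures.
From mathcomp Require Import all_boot all_order all_algebra.
From mathcomp Require Import all_classical all_reals all_analysis.
Set Implicit Arguments. Unset Strict Implicit. Unset Printing Implicit Defensive.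
Import Order.TTheory GRing.Theory Num.Theory.
Local Open Scope ring_scope.

Section FinDist.
Variable R : realType.

Definition dret (T : finType) (t : T) : T -> R := fun u => (t == u)%:R.
Definition dbind (T U : finType) (d : T -> R) (f : T -> U -> R) : U -> R :=
  fun u => \sum_(t : T) d t * f t u.
Definition dunif (T : finType) : T -> R := fun _ => (#|T|%:R)^-1.
Definition dbern (p : R) : bool -> R := fun b => if b then p else 1 - p.
Definition dprod (n : nat) (d : 'I_n -> bool -> R) : {ffun 'I_n -> bool} -> R :=
  fun x => \prod_(i < n) d i (x i).
Definition prob (T : finType) (d : T -> R) (A : {set T}) : R := \sum_(t in A) d t.

End FinDist.

(* boolean encoding of +-1: true <-> +1, false <-> -1 *)
Definition spm (R : realType) (b : bool) : R := if b then 1 else -1.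

(* a constraint: (scope S, sign b) ; b = true means b_l = +1 *)
Notation constraint n := ({set 'I_n} * bool)%type.

Definition instance (n k : nat) (Phi : seq (constraint n)) : Prop :=
  all (fun c : constraint n => #|c.1| == k) Phi && uniq (map (fun c : constraint n => c.1) Phi).

Definition neighboring (n : nat) (Phi Phi' : seq (constraint n)) : Prop :=
  exists c : constraint n, perm_eq Phi' (c :: Phi) \/ perm_eq Phi (c :: Phi').

Definition tanhR (R : realType) (x : R) : R :=
  (expR x - expR (- x)) / (expR x + expR (- x)).

Section Algo.
Variables (R : realType) (n k : nat).

(* U is encoded by its membership function: U i = true iff i \in U *)
Definition Act (Phi : seq (constraint n)) (U : {ffun 'I_n -> bool}) (j : 'I_n) :=
  seq.filter (fun c : constraint n => (j \in c.1) && [forall i in c.1, U i ==> (i == j)]) Phi.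

Definition Lambda (Phi : seq (constraint n)) (U x : {ffun 'I_n -> bool}) (j : 'I_n) : R :=
  (Num.sqrt (size Phi)%:R)^-1 *
  \sum_(c <- Act Phi U j) spm R c.2 * \prod_(i in c.1 :\ j) spm R (x i).

Definition DPAdvRand (eps : R) (Phi : seq (constraint n)) : {ffun 'I_n -> bool} -> R :=
  let m := size Phi in
  let eps' := eps * Num.sqrt m%:R / 2 in
  (* (1) s in {1,..,ceil(log2 k)} uniformly: s = s0 + 1 *)
  dbind (@dunif R 'I_(up_log 2 k)) (fun s0 =>
  let p : R := (2 ^+ s0.+1)^-1 in
  dbind (dprod (fun _ => dbern p)) (fun U =>
  (* (2) x_F uniform: the F-coordinates of a uniform z *)
  dbind (@dunif R {ffun 'I_n -> bool}) (fun z =>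
  (* (3) x_j for j in U, independently; x_i = z_i for i in F *)
  dbind (dprod (fun i => if U i
                         then dbern ((1 + tanhR (eps' * Lambda Phi U z i)) / 2)
                         else dret R (z i))) (fun y =>
  dbind (@dunif R 'I_k.+1) (fun r =>
  let eta : R := cos ((r : nat)%:R * pi / k%:R) / 2 in
  dbind (dprod (fun i => if U i then dbern ((1 - eta) / 2) else dret R false))
    (fun f =>
  dret R [ffun i => y i (+) f i])))))).

End Algo.

From HB Require Import structures.
From mathcomp Require Import all_boot all_order all_algebra.
From mathcomp Require Import all_classical all_reals all_analysis.
From mathcomp Require Import lra ring.
Set Implicit Arguments. Unset Strict Implicit. Unset Printing Implicit Defensive.
Import Order.TTheory GRing.Theory Num.Theory.
Local Open Scope ring_scope.

(** Only step (3) depends on the instance.  Fix [U] and [x_F].  The tanh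
   argument [eps' * Lambda_j] equals [eps/2] times a sum of [+-1] terms, one
   per constraint of [Act(j)], because the [sqrt m] factors cancel.  A
   constraint [c] lies in [Act(j)] for at most one [j] in [U], so adding or
   removing [c] moves at most one tanh argument, and by at most [eps/2].  As
   [P(x_j = b) = e^(b t) / (e^t + e^-t)], that move changes the probability
   of any value of [x_U] by a factor at most [e^eps].  Steps (1), (2), (4) and
   (5) mix over and post-process this step independently of the instance, so
   the pointwise bound survives to the output distribution. *)

Section FinDist.
Variable R : realType.

Lemma dunif_ge0 (T : finType) (t : T) : 0 <= dunif R t.
Proof. by rewrite /dunif invr_ge0. Qed.

Lemma dret_ge0 (T : finType) (t u : T) : 0 <= dret R t u.
Proof. by rewrite /dret ler0n. Qed.

Lemma dbern_ge0 (p : R) (b : bool) : 0 <= p <= 1 -> 0 <= dbern p b.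
Proof. by case/andP=> p_ge0 p_le1; case: b => /=; lra. Qed.

Lemma dprod_ge0 n (d : 'I_n -> bool -> R) (x : {ffun 'I_n -> bool}) :
  (forall i b, 0 <= d i b) -> 0 <= dprod d x.
Proof. by move=> d_ge0; apply: prodr_ge0. Qed.

Lemma dbind_ge0 (T U : finType) (d : T -> R) (f : T -> U -> R) (u : U) :
  (forall t, 0 <= d t) -> (forall t, 0 <= f t u) -> 0 <= dbind d f u.
Proof. by move=> d_ge0 f_ge0; apply: sumr_ge0 => t _; apply: mulr_ge0. Qed.

Lemma dbind_ler_kernel (T U : finType) (d : T -> R) (f1 f2 : T -> U -> R)
    (u : U) (C : R) :
  (forall t, 0 <= d t) -> (forall t, f1 t u <= C * f2 t u) ->
  dbind d f1 u <= C * dbind d f2 u.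
Proof.
move=> d_ge0 f12; rewrite /dbind mulr_sumr; apply: ler_sum => t _.
by rewrite mulrCA ler_wpM2l.
Qed.

Lemma dbind_ler_prior (T U : finType) (d1 d2 : T -> R) (f : T -> U -> R)
    (u : U) (C : R) :
  (forall t, d1 t <= C * d2 t) -> (forall t, 0 <= f t u) ->
  dbind d1 f u <= C * dbind d2 f u.
Proof.
move=> d12 f_ge0; rewrite /dbind mulr_sumr; apply: ler_sum => t _.
by rewrite mulrA ler_wpM2r.
Qed.

Lemma dprod_ler n (d1 d2 : 'I_n -> bool -> R) (K : 'I_n -> R)
    (x : {ffun 'I_n -> bool}) :
  (forall i, 0 <= d1 i (x i)) -> (forall i, d1 i (x i) <= K i * d2 i (x i)) ->
  dprod d1 x <= (\prod_i K i) * dprod d2 x.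
Proof.
move=> d1_ge0 d12; rewrite /dprod -big_split /=.
by apply: ler_prod => i _; rewrite d1_ge0 d12.
Qed.

Lemma prob_ler (T : finType) (d1 d2 : T -> R) (C : R) (A : {set T}) :
  (forall t, d1 t <= C * d2 t) -> prob d1 A <= C * prob d2 A.
Proof. by move=> d12; rewrite /prob mulr_sumr; apply: ler_sum. Qed.

Lemma ler_ratio (a d a' d' H : R) : 0 < d -> 0 < d' ->
  a <= H * a' -> d' <= H * d -> 0 <= H * a' -> a / d <= H * H * (a' / d').
Proof.
move=> d_gt0 d'_gt0 aa' dd' Ha'_ge0.
have invd : d^-1 <= H / d' by rewrite ler_pdivlMr // mulrC ler_pdivrMr.
apply: (le_trans (y := H * a' / d)); first by rewrite ler_wpM2r // invr_ge0 ltW.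
by rewrite mulrACA ler_wpM2l.
Qed.

Lemma prod_if_uniq_le (T : finType) (P : pred T) (a : R) : 1 <= a ->
  {in P &, forall x y, x = y} -> \prod_(i : T) (if P i then a else 1) <= a.
Proof.
move=> a_ge1 P_uniq.
have : (#|P| <= 1)%N by apply/card_le1_eqP => x y Px Py; rewrite (P_uniq x y).
by rewrite -big_mkcond prodr_const; case: #|_| => [|[]].
Qed.

Lemma dbern_tanh (t : R) (b : bool) :
  dbern ((1 + tanhR t) / 2) b = expR (spm R b * t) / (expR t + expR (- t)).
Proof.
have := expR_gt0 t; have := expR_gt0 (- t).
by case: b; rewrite /= /tanhR ?mul1r ?mulN1r => ? ?; field; lra.
Qed.

Lemma dbern_tanh_ler (eps t1 t2 : R) (b : bool) : `|t1 - t2| <= eps / 2 ->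
  dbern ((1 + tanhR t1) / 2) b <= expR eps * dbern ((1 + tanhR t2) / 2) b.
Proof.
rewrite ler_norml => /andP[t12 t21].
have expR_shift x y : x <= y + eps / 2 -> expR x <= expR (eps / 2) * expR y.
  by move=> xy; rewrite -expRD ler_expR addrC.
have -> : expR eps = expR (eps / 2) * expR (eps / 2).
  by rewrite -expRD -splitr.
rewrite !dbern_tanh; apply: ler_ratio.
- by rewrite addr_gt0 ?expR_gt0.
- by rewrite addr_gt0 ?expR_gt0.
- by apply: expR_shift; case: b => /=; lra.
- by rewrite mulrDr lerD // expR_shift //; lra.
- by rewrite mulr_ge0 ?expR_ge0.
Qed.

End FinDist.

Section AdvKernel.
Variables (R : realType) (n : nat).
Implicit Types (Phi : seq (constraint n)) (c : constraint n).
Implicit Types (U z : {ffun 'I_n -> bool}) (i j : 'I_n).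

Definition active U j c : bool :=
  (j \in c.1) && [forall i in c.1, U i ==> (i == j)].

Definition contribution z j c : R :=
  spm R c.2 * \prod_(i in c.1 :\ j) spm R (z i).

Definition tanh_arg (eps : R) Phi U z j : R :=
  eps * Num.sqrt (size Phi)%:R / 2 * Lambda R Phi U z j.

Definition adv_kernel (eps : R) Phi U z : 'I_n -> bool -> R :=
  fun i => if U i then dbern ((1 + tanhR (tanh_arg eps Phi U z i)) / 2)
           else dret R (z i).

Definition tanh_arg_close (eps : R) Phi Phi' c U z : Prop :=
  forall j, `|tanh_arg eps Phi U z j - tanh_arg eps Phi' U z j| <= eps / 2 /\
            (~~ active U j c -> tanh_arg eps Phi U z j = tanh_arg eps Phi' U z j).

Lemma active_uniq U i j c : U i -> U j -> active U i c -> active U j c -> i = j.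
Proof.
move=> _ Uj /andP[_ /forall_inP only_i] /andP[jc _].
by have := only_i j jc; rewrite Uj => /eqP.
Qed.

Lemma normr_contribution z j c : `|contribution z j c| = 1.
Proof.
have normr_spm b : `|spm R b| = 1 by case: b; rewrite /spm ?normrN normr1.
by rewrite normrM normr_prod normr_spm big1 ?mulr1 // => i _; rewrite normr_spm.
Qed.

Lemma tanh_argE eps Phi U z j :
  tanh_arg eps Phi U z j = eps / 2 * \sum_(c <- Act Phi U j) contribution z j c.
Proof.
rewrite /tanh_arg /Lambda; case: Phi => [|c0 Phi]; first by rewrite big_nil !mulr0.
have : 0 < Num.sqrt (size (c0 :: Phi))%:R :> R by rewrite sqrtr_gt0 ltr0n.
by set s := Num.sqrt _ => s_gt0; field; rewrite gt_eqF.
Qed.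

Lemma tanh_arg_perm_cons eps Phi Phi' c U z j : perm_eq Phi' (c :: Phi) ->
  tanh_arg eps Phi' U z j =
  tanh_arg eps Phi U z j + eps / 2 * (if active U j c then contribution z j c else 0).
Proof.
move=> Phi'E; rewrite !tanh_argE /Act (perm_big _ (perm_filter _ Phi'E)) /=.
by rewrite /active; case: ifP => _; rewrite ?big_cons ?mulr0 ?addr0 // mulrDr addrC.
Qed.

Lemma tanh_arg_neighboring eps Phi Phi' : 0 <= eps -> neighboring Phi Phi' ->
  exists c, forall U z, tanh_arg_close eps Phi Phi' c U z.
Proof.
move=> eps_ge0 [c Phi_c]; exists c => U z.
suff close Phi1 Phi2 : perm_eq Phi2 (c :: Phi1) -> tanh_arg_close eps Phi2 Phi1 c U z.
  case: Phi_c => /close // close' j; have [dist same] := close' j.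
  by rewrite distrC; split=> // /same ->.
move=> /(tanh_arg_perm_cons eps U z) Phi2E j.
rewrite Phi2E addrAC subrr add0r normrM.
split; last by move/negbTE ->; rewrite mulr0 addr0.
rewrite ger0_norm ?divr_ge0 // ler_piMr ?divr_ge0 //.
by case: ifP; rewrite ?normr0 ?normr_contribution.
Qed.

Lemma adv_kernel_ge0 eps Phi U z i b : 0 <= adv_kernel eps Phi U z i b.
Proof.
rewrite /adv_kernel; case: (U i); last exact: dret_ge0.
by rewrite dbern_tanh divr_ge0 ?addr_ge0 ?expR_ge0.
Qed.

Lemma adv_kernel_ler eps Phi Phi' c U z y :
  0 <= eps -> tanh_arg_close eps Phi Phi' c U z ->
  dprod (adv_kernel eps Phi U z) y <= expR eps * dprod (adv_kernel eps Phi' U z) y.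
Proof.
move=> eps_ge0 close; have expR_ge1 : 1 <= expR eps by rewrite -expR0 ler_expR.
pose K j := if U j && active U j c then expR eps else 1.
apply: (le_trans (dprod_ler (d2 := adv_kernel eps Phi' U z) (K := K) _ _)).
- by move=> i; exact: adv_kernel_ge0.
- move=> i; rewrite /K /adv_kernel; have [dist same] := close i.
  case: (U i); last by rewrite mul1r.
  case: (boolP (active U i c)) => [_|/same ->]; first exact: dbern_tanh_ler.
  by rewrite mul1r.
- rewrite ler_wpM2r ?dprod_ge0 // => [i b|]; first exact: adv_kernel_ge0.
  apply: prod_if_uniq_le => // i j /andP[Ui act_i] /andP[Uj act_j].
  exact: active_uniq act_i act_j.
Qed.

End AdvKernel.

Theorem theorem4p4 (R : realType) (n k : nat) (eps : R) :
  (2 <= k)%N -> 0 < eps ->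
  forall Phi Phi' : seq (constraint n),
    instance k Phi -> instance k Phi' -> neighboring Phi Phi' ->
    forall T : {set {ffun 'I_n -> bool}},
      prob (DPAdvRand k eps Phi) T <= expR eps * prob (DPAdvRand k eps Phi') T.
Proof.
move=> _ eps_gt0 Phi Phi' _ _ /(tanh_arg_neighboring (ltW eps_gt0)) [c close] T.
apply: prob_ler => x; rewrite /DPAdvRand.
apply: dbind_ler_kernel => [s|s]; first exact: dunif_ge0.
apply: dbind_ler_kernel => [U|U].
  apply: dprod_ge0 => i b; apply: dbern_ge0.
  by rewrite invr_ge0 exprn_ge0 //= invf_le1 ?exprn_ege1 ?exprn_gt0 ?ler1n.
apply: dbind_ler_kernel => [z|z]; first exact: dunif_ge0.
apply: dbind_ler_prior => [y|y]; first exact: adv_kernel_ler (ltW eps_gt0) _.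
apply: dbind_ge0 => [r|r]; first exact: dunif_ge0.
apply: dbind_ge0 => [f|f]; last exact: dret_ge0.
apply: dprod_ge0 => i b; case: (U i); last exact: dret_ge0.
apply: dbern_ge0; set a := _ * pi / _.
by have := cos_le1 a; have := cos_geN1 a; lra.
Qed.
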